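(* For each $y$ in the peak-insertion set of an avoider $p$ on $[n]$, there is exactly one position $i$ such that $q:=p\oplus_{i}y$ satisfies (i) $q$ is an avoider, (ii) the peak blue entry of $q$ is $y$, and (iii) $q$ has exactly one more blue entry than $p$. Also, for $y$ not in the peak-insertion set of $p$, there is no such $i$.
   Context: Permutations are standard permutations written in one-line form. A permutation on $[n]$ is indecomposable if there is no $k$ with $1\le k<n$ such that its first $k$ entries are exactly $\{1,\dots,k\}$ (the empty permutation is not indecomposable). An ''avoider'' means an indecomposable permutation avoiding both patterns $3241$ and $4321$. A blue (key-2) entry is an entry that serves as the ''2'' in a $321$ pattern or in a $4312$ pattern. For a $321$-containing avoider, let $a$ be the last (rightmost) entry serving as the ''1'' of a $321$ pattern; the peak blue entry is the larger of $a$ and its immediate predecessor. Inserting $y$ at position $i$ into $p$, written $p\oplus_i y$, means incrementing by $1$ each entry $\ge y$ and then placing $y$ in position $i$ (e.g. $3142\oplus_4 2=41523$). LRMax means left-to-right maximum. To a $321$-containing permutation $p$ on $[n]$ associate the triple $(a,b,c)$: $a$ is the last ''1'' of a $321$ in $p$, $b$ is the rightmost entry to the left of $a$ that exceeds $a$, and $c$ is the first non-LRMax entry after $a$ ($c=\infty$ if there is none). Its peak-insertion set is $[a+1,b+1]\cup[c+1,n]$, where $[c+1,n]=\emptyset$ if $c=\infty$. For a $321$-avoiding permutation on $[n]$, set $c=1$ and define its peak-insertion set to be $[2,n]$. *)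

(* Permutations are one-line words: seq nat with entries 1..n.
   Positions are 0-indexed internally; insertion position i is 1-indexed as in the paper. *)
From mathcomp Require Import all_boot.
Set Implicit Arguments. Unset Strict Implicit. Unset Printing Implicit Defensive.

Definition ent (p : seq nat) (j : nat) : nat := nth 0 p j.

Definition is_perm (n : nat) (p : seq nat) : bool := perm_eq p (iota 1 n).

Definition indecomposable (p : seq nat) : bool :=
  (0 < size p) &&
  all (fun k => ~~ perm_eq (take k p) (iota 1 k)) (iota 1 (size p).-1).

Definition occ (p pat idx : seq nat) : bool :=
  [&& size idx == size pat, sorted ltn idx, all (fun j => j < size p) idx &
      all (fun a => all (fun b =>
        (ent p (nth 0 idx a) < ent p (nth 0 idx b)) == (nth 0 pat a < nth 0 pat b))
        (iota 0 (size pat))) (iota 0 (size pat))].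

Definition contains (p pat : seq nat) : bool :=
  [exists t : (size pat).-tuple 'I_(size p), occ p pat (map val t)].

Definition avoids (p pat : seq nat) : bool := ~~ contains p pat.

Definition avoider (n : nat) (p : seq nat) : bool :=
  [&& is_perm n p, indecomposable p, avoids p [:: 3; 2; 4; 1] & avoids p [:: 4; 3; 2; 1]].

Definition blue (p : seq nat) (x : nat) : bool :=
  [exists t : 3.-tuple 'I_(size p),
     occ p [:: 3; 2; 1] (map val t) && (ent p (nth 0 (map val t) 1) == x)] ||
  [exists t : 4.-tuple 'I_(size p),
     occ p [:: 4; 3; 1; 2] (map val t) && (ent p (nth 0 (map val t) 3) == x)].

Definition nblue (p : seq nat) : nat := count (blue p) p.

Definition one321_at (p : seq nat) (j : nat) : bool :=
  [exists t : 3.-tuple 'I_(size p),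
     occ p [:: 3; 2; 1] (map val t) && (nth 0 (map val t) 2 == j)].

Definition is_last_one (p : seq nat) (ja : nat) : Prop :=
  one321_at p ja /\ forall j, one321_at p j -> j <= ja.

Definition peak_blue_is (p : seq nat) (v : nat) : Prop :=
  exists ja, is_last_one p ja /\ v = maxn (ent p ja) (ent p ja.-1).

Definition is_b (p : seq nat) (ja jb : nat) : Prop :=
  jb < ja /\ ent p ja < ent p jb /\
  forall k, jb < k -> k < ja -> ~ (ent p ja < ent p k).

Definition LRMax (p : seq nat) (k : nat) : Prop :=
  forall k', k' < k -> ent p k' < ent p k.

Definition is_c (p : seq nat) (ja jc : nat) : Prop :=
  ja < jc /\ jc < size p /\ ~ LRMax p jc /\
  forall k, ja < k -> k < jc -> LRMax p k.

Definition in_peak_insertion_set (n : nat) (p : seq nat) (y : nat) : Prop :=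
  (~~ contains p [:: 3; 2; 1] /\ 2 <= y <= n) \/
  (exists ja jb, is_last_one p ja /\ is_b p ja jb /\
     ((ent p ja + 1 <= y <= ent p jb + 1) \/
      (exists jc, is_c p ja jc /\ ent p jc + 1 <= y <= n))).

Definition ins (p : seq nat) (i y : nat) : seq nat :=
  let p' := map (fun v => if y <= v then v.+1 else v) p in
  take i.-1 p' ++ y :: drop i.-1 p'.

Definition good_insertion (n : nat) (p : seq nat) (i y : nat) : Prop :=
  avoider n.+1 (ins p i y) /\ peak_blue_is (ins p i y) y /\
  nblue (ins p i y) = (nblue p).+1.

Lemma ins_example : ins [:: 3; 1; 4; 2] 4 2 = [:: 4; 1; 5; 2; 3].
Proof. by []. Qed.

From mathcomp Require Import all_boot zify.
From Stdlib Require Import Classical.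
Set Implicit Arguments. Unset Strict Implicit. Unset Printing Implicit Defensive.

(* Let a be the last "1" of a 321 in p.  Inserting y makes y the peak blue entry in one of
   two ways.  Either y becomes the last "1" of the new permutation, which forces it to sit
   right after a, above some inversion of p lying left of a; or y sits just before the new
   last "1", which is then the old entry that y precedes.  In the second case, avoiding
   3241 and 4321 while creating a single new blue entry forces that old entry to be a
   itself when y <= b+1, and otherwise the last entry of p smaller than y.  These
   prescriptions (the "peak slot" of y) determine at most one position, a peak slot exists
   exactly when y lies in the peak-insertion set, and inserting y at it is good. *)

(** * Pattern occurrences *)

Lemma exists_occP (p pat : seq nat) (P : pred (seq nat)) :
  reflect (exists2 idx, occ p pat idx & P idx)
    [exists t : (size pat).-tuple 'I_(size p), occ p pat (map val t) && P (map val t)].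
Proof.
apply: (iffP existsP) => [[t /andP[]]|[idx oc Pidx]]; first by exists (map val t).
have /and4P[/eqP sz _ lt _] := oc.
have val_pmap : map val (pmap insub idx : seq 'I_(size p)) = idx.
  by rewrite (pmap_filter (insubK _)) (eq_filter (isSome_insub _)); exact/all_filterP.
have szt : size (pmap insub idx : seq 'I_(size p)) == size pat.
  by rewrite -sz -(size_map val) val_pmap.
by exists (Tuple szt); rewrite /= val_pmap oc.
Qed.

Lemma containsP p pat : reflect (exists idx, occ p pat idx) (contains p pat).
Proof.
apply: (iffP idP) => [|[idx oc]].
  by case/existsP=> t oc; exists (map val t).
have /exists_occP/existsP[t /andP[oct _]] : exists2 idx, occ p pat idx & predT idx.
  by exists idx.
by apply/existsP; exists t.
Qed.

Lemma occ321E p i j k : occ p [:: 3; 2; 1] [:: i; j; k] =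
  [&& i < j, j < k, k < size p, ent p j < ent p i & ent p k < ent p j].
Proof.
rewrite /occ /= !ltnn /= !eqbF_neg !eqb_id !andbT.
apply/idP/idP=> H; repeat (case/andP: H => ? H); lia.
Qed.

Lemma occ4321E p i j k l : occ p [:: 4; 3; 2; 1] [:: i; j; k; l] =
  [&& i < j, j < k, k < l, l < size p,
      ent p j < ent p i, ent p k < ent p j & ent p l < ent p k].
Proof.
rewrite /occ /= !ltnn /= !eqbF_neg !eqb_id !andbT.
apply/idP/idP=> H; repeat (case/andP: H => ? H); lia.
Qed.

Lemma occ3241E p i j k l : occ p [:: 3; 2; 4; 1] [:: i; j; k; l] =
  [&& i < j, j < k, k < l, l < size p,
      ent p j < ent p i, ent p i < ent p k & ent p l < ent p j].
Proof.
rewrite /occ /= !ltnn /= !eqbF_neg !eqb_id !andbT.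
apply/idP/idP=> H; repeat (case/andP: H => ? H); lia.
Qed.

Lemma occ4312E p i j k l : occ p [:: 4; 3; 1; 2] [:: i; j; k; l] =
  [&& i < j, j < k, k < l, l < size p,
      ent p j < ent p i, ent p l < ent p j & ent p k < ent p l].
Proof.
rewrite /occ /= !ltnn /= !eqbF_neg !eqb_id !andbT.
apply/idP/idP=> H; repeat (case/andP: H => ? H); lia.
Qed.

Lemma occ_size p pat idx : occ p pat idx -> size idx = size pat.
Proof. by case/and4P=> /eqP. Qed.

Section Patterns.
Variable p : seq nat.
Local Notation P := (ent p).
Local Notation N := (size p).

Lemma contains321P : reflect
  (exists i j k, [/\ i < j, j < k, k < N, P j < P i & P k < P j])
  (contains p [:: 3; 2; 1]).
Proof.
apply: (iffP (containsP _ _)) => [[idx oc]|[i [j [k /and5P oc]]]].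
  have := occ_size oc; case: idx oc => [|i [|j [|k []]]] //.
  by rewrite occ321E => /and5P ? _; exists i, j, k.
by exists [:: i; j; k]; rewrite occ321E.
Qed.

Lemma contains4321P : reflect
  (exists i j k l, [/\ i < j, j < k, k < l, l < N & [/\ P j < P i, P k < P j & P l < P k]])
  (contains p [:: 4; 3; 2; 1]).
Proof.
apply: (iffP (containsP _ _)) => [[idx oc]|[i [j [k [l [? ? ? ? [? ? ?]]]]]]].
  have := occ_size oc; case: idx oc => [|i [|j [|k [|l []]]]] //.
  by rewrite occ4321E => /and5P[? ? ? ? /and3P[? ? ?]] _; exists i, j, k, l.
by exists [:: i; j; k; l]; rewrite occ4321E; apply/and5P; split=> //; apply/and3P.
Qed.

Lemma contains3241P : reflect
  (exists i j k l, [/\ i < j, j < k, k < l, l < N & [/\ P j < P i, P i < P k & P l < P j]])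
  (contains p [:: 3; 2; 4; 1]).
Proof.
apply: (iffP (containsP _ _)) => [[idx oc]|[i [j [k [l [? ? ? ? [? ? ?]]]]]]].
  have := occ_size oc; case: idx oc => [|i [|j [|k [|l []]]]] //.
  by rewrite occ3241E => /and5P[? ? ? ? /and3P[? ? ?]] _; exists i, j, k, l.
by exists [:: i; j; k; l]; rewrite occ3241E; apply/and5P; split=> //; apply/and3P.
Qed.

Lemma one321_atP k : reflect
  (exists i j, [/\ i < j, j < k, k < N, P j < P i & P k < P j])
  (one321_at p k).
Proof.
apply: (iffP (exists_occP p [:: 3; 2; 1] (fun idx => nth 0 idx 2 == k)))
  => [[idx oc last]|[i [j /and5P oc]]].
  have := occ_size oc; case: idx oc last => [|i [|j [|k' []]]] //.
  by rewrite occ321E => /and5P ? /eqP /= <- _; exists i, j.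
by exists [:: i; j; k]; rewrite ?occ321E.
Qed.

Definition blue_at (j : nat) : Prop :=
  (exists i k, [/\ i < j, j < k, k < N, P j < P i & P k < P j]) \/
  (exists i i' k, [/\ i < i', i' < k, k < j, j < N & [/\ P i' < P i, P j < P i' & P k < P j]]).

Lemma blue_at_size j : blue_at j -> j < N.
Proof. by case=> [[i [k [? ? ? _ _]]]|[i [i' [k [_ _ _ ? _]]]]] //; lia. Qed.

Lemma blueP x : reflect (exists2 j, blue_at j & P j = x) (blue p x).
Proof.
apply: (iffP orP) => [[]|[j [[i [k /and5P oc]]|[i [i' [k [? ? ? ? [? ? ?]]]]]] <-]].
- case/(exists_occP p [:: 3; 2; 1] (fun idx => P (nth 0 idx 1) == x))=> idx oc mid.
  have := occ_size oc; case: idx oc mid => [|i [|j [|k []]]] //.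
  by rewrite occ321E => /and5P ? /eqP /= <- _; exists j; first by left; exists i, k.
- case/(exists_occP p [:: 4; 3; 1; 2] (fun idx => P (nth 0 idx 3) == x))=> idx oc last.
  have := occ_size oc; case: idx oc last => [|i [|i' [|k [|j []]]]] //.
  rewrite occ4312E => /and5P[? ? ? ? /and3P[? ? ?]] /eqP /= <- _.
  by exists j; first by right; exists i, i', k.
- left; apply/(exists_occP p [:: 3; 2; 1] (fun idx => P (nth 0 idx 1) == P j)).
  by exists [:: i; j; k]; rewrite ?occ321E.
- right; apply/(exists_occP p [:: 4; 3; 1; 2] (fun idx => P (nth 0 idx 3) == P j)).
  by exists [:: i; i'; k; j]; rewrite ?occ4312E //; apply/and5P; split=> //; apply/and3P.
Qed.

End Patterns.

(** * Inserting an entry *)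

Lemma ltn_bump2 h i j : (bump h i < bump h j) = (i < j).
Proof. by rewrite !ltnNge leq_bump2. Qed.

Lemma bump_ltn h i : (bump h i < h) = (i < h).
Proof. rewrite /bump; lia. Qed.

Lemma ltn_bump h i : (h < bump h i) = (h <= i).
Proof. rewrite /bump; lia. Qed.

Definition inversion_above (p : seq nat) (y ja : nat) : Prop :=
  exists i j, [/\ i < j, j < ja, ent p j < ent p i & y <= ent p j].

Section Insertion.
Variables (p : seq nat) (y s : nat).
Hypotheses (y_gt0 : 0 < y) (s_le : s <= size p).
Local Notation P := (ent p).
Local Notation N := (size p).
Local Notation q := (ins p s.+1 y).
Local Notation Q := (ent (ins p s.+1 y)).

Lemma ins_bumpE : q = take s (map (bump y) p) ++ y :: drop s (map (bump y) p).
Proof.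
by rewrite /ins /=; congr (take _ _ ++ _ :: drop _ _);
  apply/eq_map=> v; rewrite /bump; case: leqP.
Qed.

Lemma size_ins : size q = N.+1.
Proof. by rewrite ins_bumpE size_cat /= size_drop size_takel ?size_map // addnS subnKC. Qed.

Lemma perm_ins : perm_eq q (y :: map (bump y) p).
Proof. by rewrite ins_bumpE -cat1s perm_catCA cat_take_drop. Qed.

Lemma ent_ins_at : Q s = y.
Proof. by rewrite ins_bumpE /ent nth_cat size_takel ?size_map // ltnn subnn. Qed.

Lemma ent_ins_bump k : Q (bump s k) = bump y (P k).
Proof.
have nth_bump j : nth 0 (map (bump y) p) j = bump y (P j).
  case: (ltnP j N) => [lt_jN|le_Nj]; first exact: nth_map.
  by rewrite /ent !nth_default ?size_map // /bump leqNgt y_gt0.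
rewrite ins_bumpE /ent nth_cat size_takel ?size_map // bump_ltn.
case: ltnP => [lt_ks|le_sk].
  have -> : bump s k = k by rewrite /bump leqNgt lt_ks.
  by rewrite nth_take // nth_bump.
by rewrite /bump le_sk add1n subSn //= nth_drop subnKC.
Qed.

Lemma ent_ins_lt t : t < s -> Q t = bump y (P t).
Proof.
move=> lt_ts; have tE : bump s t = t by rewrite /bump; lia.
by rewrite -{1}tE ent_ins_bump.
Qed.

Lemma ent_ins_gt t : s < t -> Q t = bump y (P t.-1).
Proof.
move=> lt_st; have tE : bump s t.-1 = t by rewrite /bump; lia.
by rewrite -{1}tE ent_ins_bump.
Qed.

Lemma ins_positionP t : t = s \/ exists k, t = bump s k.
Proof.
case: (eqVneq t s) => [|neq_ts]; [by left | right].
by exists (unbump s t); rewrite unbumpK // inE.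
Qed.

Lemma bump_ltn_size k : (bump s k < N.+1) = (k < N).
Proof.
rewrite /bump; case: (leqP s k) => [_|lt_ks] //=.
by rewrite !(leq_trans lt_ks) // ltnW.
Qed.


Ltac ins_pos t k := have [->|[k ->]] := ins_positionP t.
Ltac ins_simpl :=
  rewrite ?size_ins ?ent_ins_at ?ent_ins_bump ?ltn_bump2 ?bump_ltn ?ltn_bump ?bump_ltn_size.

(* An occurrence in [q] either avoids [y] or uses it as its first, second, third or last
   entry; the disjuncts list these cases in this order. *)
Lemma contains4321_ins_cases : contains q [:: 4; 3; 2; 1] ->
  contains p [:: 4; 3; 2; 1] \/
  [\/ exists j k l, [/\ s <= j, j < k, k < l, l < N & [/\ P j < y, P k < P j & P l < P k]],
    exists i k l, [/\ i < s, s <= k, k < l, l < N & [/\ y <= P i, P k < y & P l < P k]],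
    exists i j l, [/\ i < j, j < s, s <= l, l < N & [/\ P j < P i, y <= P j & P l < y]] |
    exists i j k, [/\ i < j, j < k, k < s, k < N & [/\ P j < P i, P k < P j & y <= P k]]].
Proof.
case/contains4321P=> t1 [t2 [t3 [t4]]].
ins_pos t1 k1; ins_pos t2 k2; ins_pos t3 k3; ins_pos t4 k4; ins_simpl;
  move=> [lt12 lt23 lt34 lt4 [v1 v2 v3]]; try by exfalso; lia.
- by right; apply: Or41; exists k2, k3, k4; repeat split; lia.
- by right; apply: Or42; exists k1, k3, k4; repeat split; lia.
- by right; apply: Or43; exists k1, k2, k4; repeat split; lia.
- by right; apply: Or44; exists k1, k2, k3; repeat split; lia.
- by left; apply/contains4321P; exists k1, k2, k3, k4.
Qed.


Lemma contains3241_ins_cases : contains q [:: 3; 2; 4; 1] ->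
  contains p [:: 3; 2; 4; 1] \/
  [\/ exists j k l, [/\ s <= j, j < k, k < l, l < N & [/\ P j < y, y <= P k & P l < P j]],
    exists i k l, [/\ i < s, s <= k, k < l, l < N & [/\ y <= P i, P i < P k & P l < y]],
    exists i j l, [/\ i < j, j < s, s <= l, l < N & [/\ P j < P i, P i < y & P l < P j]] |
    exists i j k, [/\ i < j, j < k, k < s, k < N & [/\ P j < P i, P i < P k & y <= P j]]].
Proof.
case/contains3241P=> t1 [t2 [t3 [t4]]].
ins_pos t1 k1; ins_pos t2 k2; ins_pos t3 k3; ins_pos t4 k4; ins_simpl;
  move=> [lt12 lt23 lt34 lt4 [v1 v2 v3]]; try by exfalso; lia.
- by right; apply: Or41; exists k2, k3, k4; repeat split; lia.
- by right; apply: Or42; exists k1, k3, k4; repeat split; lia.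
- by right; apply: Or43; exists k1, k2, k4; repeat split; lia.
- by right; apply: Or44; exists k1, k2, k3; repeat split; lia.
- by left; apply/contains3241P; exists k1, k2, k3, k4.
Qed.

(* The "1" is [y] itself, or an old entry with [y] absent, the "2" or the "3". *)
Lemma one321_at_ins_cases t : one321_at q t ->
  (t = s /\ inversion_above p y s) \/
  exists k, [/\ t = bump s k, k < N &
    [\/ one321_at p k,
        s <= k /\ exists i, [/\ i < s, y <= P i & P k < y] |
        exists j, [/\ s <= j, j < k, P j < y & P k < P j]]].
Proof.
case/one321_atP=> t1 [t2].
ins_pos t k; ins_pos t1 k1; ins_pos t2 k2; ins_simpl;
  move=> [lt12 lt2 lt v1 v2]; try by exfalso; lia.
- by left; split=> //; exists k1, k2.
- by right; exists k; split=> //; apply: Or33; exists k2; split=> //; lia.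
- by right; exists k; split=> //; apply: Or32; split; [lia | exists k1].
- by right; exists k; split=> //; apply: Or31; apply/one321_atP; exists k1, k2.
Qed.

(* Either [y] is absent, or it is the "3" or the "1" of the 321, or the "4", the "3" or the
   "1" of the 4312. *)
Lemma blue_at_ins_cases k : blue_at q (bump s k) -> k < N ->
  [\/ blue_at p k,
      s <= k /\ P k < y /\ exists l, [/\ k < l, l < N & P l < P k] |
      k < s /\ y <= P k /\ exists i, i < k /\ P k < P i] \/
  [\/ exists j l, [/\ s <= j, j < l, l < k & [/\ P j < y, P k < P j & P l < P k]],
    exists i l, [/\ i < s, s <= l, l < k & [/\ y <= P i, P k < y & P l < P k]] |
    exists i j, [/\ i < j, j < s, s <= k & [/\ P j < P i, P k < P j & y <= P k]]].
Proof.
case=> [[t1 [t3]]|[t1 [t2 [t3]]]].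
- ins_pos t1 k1; ins_pos t3 k3; ins_simpl;
    move=> [lt1 lt3 lt v1 v3] ltk; try by exfalso; lia.
  + by left; apply: Or32; split; [lia | split=> //; exists k3].
  + by left; apply: Or33; split; [lia | split=> //; exists k1].
  + by left; apply: Or31; left; exists k1, k3.
- ins_pos t1 k1; ins_pos t2 k2; ins_pos t3 k3; ins_simpl;
    move=> [lt12 lt23 lt3 lt [v1 v2 v3]] ltk; try by exfalso; lia.
  + by right; apply: Or31; exists k2, k3; repeat split; lia.
  + by right; apply: Or32; exists k1, k3; repeat split; lia.
  + by right; apply: Or33; exists k1, k2; repeat split; lia.
  + by left; apply: Or31; right; exists k1, k2, k3.
Qed.

Lemma one321_at_ins_bump k : one321_at p k -> one321_at q (bump s k).
Proof.
case/one321_atP=> i [j [lt_ij lt_jk lt_kN v1 v2]].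
by apply/one321_atP; exists (bump s i), (bump s j); ins_simpl.
Qed.

Lemma blue_at_ins_bump k : blue_at p k -> blue_at q (bump s k).
Proof.
case=> [[i [l [? ? ? ? ?]]]|[i [j [l [? ? ? ? [? ? ?]]]]]].
  by left; exists (bump s i), (bump s l); ins_simpl.
by right; exists (bump s i), (bump s j), (bump s l); ins_simpl.
Qed.

Lemma one321_at_ins_at : inversion_above p y s -> one321_at q s.
Proof.
case=> i [j [lt_ij lt_js v1 v2]]; apply/one321_atP; exists i, j.
rewrite size_ins ent_ins_at !ent_ins_lt //; try lia.
by rewrite ltn_bump2 ltn_bump; split; lia.
Qed.


Section InsertedMiddle.
Variables i k : nat.
Hypotheses (lt_is : i < s) (le_sk : s <= k) (lt_kN : k < N) (le_yi : y <= P i) (lt_ky : P k < y).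

Let ins_321 : [/\ i < s, s < k.+1, k.+1 < size q, Q s < Q i & Q k.+1 < Q s].
Proof.
rewrite size_ins ent_ins_at (ent_ins_gt (t := k.+1)) //= ent_ins_lt // ltn_bump bump_ltn.
by split; lia.
Qed.

Lemma one321_at_ins_after : one321_at q k.+1.
Proof. by apply/one321_atP; exists i, s; case: ins_321. Qed.

Lemma blue_ins_middle : blue q y.
Proof. by apply/blueP; exists s; [left; exists i, k.+1; case: ins_321 | exact: ent_ins_at]. Qed.

End InsertedMiddle.

Lemma blue_ins_last i j k : i < j -> j < k -> k < s ->
  P j < P i -> y <= P j -> P k < y -> blue q y.
Proof.
move=> lt_ij lt_jk lt_ks v1 v2 v3; apply/blueP; exists s; last exact: ent_ins_at.
right; exists i, j, k.
rewrite size_ins ent_ins_at !ent_ins_lt //; try lia.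
by rewrite ltn_bump2 bump_ltn ltn_bump; split; try split; lia.
Qed.

Lemma contains4321_ins_of i j l : i < j -> j < s -> s <= l -> l < N ->
  P j < P i -> y <= P j -> P l < y -> contains q [:: 4; 3; 2; 1].
Proof.
move=> lt_ij lt_js le_sl lt_lN v1 v2 v3; apply/contains4321P; exists i, j, s, l.+1.
rewrite size_ins ent_ins_at (ent_ins_gt (t := l.+1)) // !ent_ins_lt //; try lia.
by rewrite /= ?ltn_bump2 ?bump_ltn ?ltn_bump; split; try split; lia.
Qed.

Lemma contains3241_ins_of i j l : i < j -> j < s -> s <= l -> l < N ->
  P j < P i -> P i < y -> P l < P j -> contains q [:: 3; 2; 4; 1].
Proof.
move=> lt_ij lt_js le_sl lt_lN v1 v2 v3; apply/contains3241P; exists i, j, s, l.+1.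
rewrite size_ins ent_ins_at (ent_ins_gt (t := l.+1)) // !ent_ins_lt //; try lia.
by rewrite /= ?ltn_bump2 ?bump_ltn ?ltn_bump; split; try split; lia.
Qed.

Lemma nblue_ins : {in p, forall x, blue q (bump y x) = blue p x} -> blue q y ->
  nblue q = (nblue p).+1.
Proof.
move=> blue_bump blue_y; rewrite /nblue (permP perm_ins) /= blue_y count_map add1n.
by congr _.+1; apply: eq_in_count.
Qed.

Lemma blue_ins_bump : uniq p -> (forall k, blue_at q (bump s k) -> blue_at p k) ->
  {in p, forall x, blue q (bump y x) = blue p x}.
Proof.
move=> uniq_p blue_back x /(nthP 0)[k lt_kN <-].
apply/blueP/blueP=> [[t blue_t Qt]|[k' blue_k' <-]].
  have [ts|[k' tk']] := ins_positionP t; subst t.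
    by move: (neq_bump y (P k)); rewrite -Qt ent_ins_at eqxx.
  have lt_k'N : k' < N by rewrite -(bump_ltn_size k') -size_ins blue_at_size.
  move: Qt; rewrite ent_ins_bump => /(can_inj (bumpK y))/eqP.
  rewrite /ent nth_uniq // => /eqP eq_k'k.
  by exists k => //; rewrite -eq_k'k; apply: blue_back.
by exists (bump s k'); [exact: blue_at_ins_bump | rewrite ent_ins_bump].
Qed.

End Insertion.

(** * Permutations and indecomposability *)

Lemma perm_bump_iota n y : 0 < y <= n.+1 ->
  perm_eq (y :: map (bump y) (iota 1 n)) (iota 1 n.+1).
Proof.
move=> y_range; apply: uniq_perm; last 1 first.
- move=> x; rewrite in_cons mem_iota; case: (eqVneq x y) => [-> //|neq_xy].
  have xE : bump y (unbump y x) = x by rewrite unbumpK // inE.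
  rewrite -xE mem_map ?mem_iota; last exact: can_inj (bumpK y).
  by rewrite /bump /unbump; lia.
- rewrite /= map_inj_uniq ?iota_uniq ?andbT; last exact: can_inj (bumpK y).
  by apply/mapP=> -[v _ /eqP]; rewrite (negbTE (neq_bump y v)).
- exact: iota_uniq.
Qed.

Section Permutation.
Variables (n : nat) (p : seq nat).
Hypothesis perm_p : is_perm n p.
Local Notation P := (ent p).

Lemma is_perm_size : size p = n.
Proof. by rewrite (perm_size perm_p) size_iota. Qed.

Lemma is_perm_uniq : uniq p.
Proof. by rewrite (perm_uniq perm_p) iota_uniq. Qed.

Lemma is_perm_ent_range k : k < n -> 0 < P k <= n.
Proof. by move=> lt_kn; rewrite -(mem_iota 1) -(perm_mem perm_p) mem_nth ?is_perm_size. Qed.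

Lemma is_perm_ent_inj i j : i < n -> j < n -> P i = P j -> i = j.
Proof.
by move=> lt_in lt_jn /eqP; rewrite /ent nth_uniq ?is_perm_size ?is_perm_uniq // => /eqP.
Qed.

Lemma is_perm_ent_surj v : 0 < v <= n -> exists2 k, k < n & P k = v.
Proof.
rewrite -(mem_iota 1) -(perm_mem perm_p) => /(nthP 0)[k lt_kN <-].
by exists k; rewrite -?is_perm_size.
Qed.

Lemma is_perm_ins y s : 0 < y <= n.+1 -> is_perm n.+1 (ins p s.+1 y).
Proof.
move=> y_range; apply: perm_trans (perm_ins p y s) _.
by apply: perm_trans (perm_bump_iota y_range); rewrite perm_cons perm_map.
Qed.

Lemma prefix_perm_iotaP k : k <= n ->
  reflect (forall j, j < k -> 0 < P j <= k) (perm_eq (take k p) (iota 1 k)).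
Proof.
move=> le_kn; have size_take : size (take k p) = k by rewrite size_takel ?is_perm_size.
apply: (iffP idP) => [prefix j lt_jk|ent_range].
  by rewrite -(mem_iota 1) -(perm_mem prefix) /ent -(nth_take 0 lt_jk) mem_nth ?size_take.
apply: uniq_perm; [exact: take_uniq is_perm_uniq | exact: iota_uniq |].
apply/(uniq_min_size (take_uniq k is_perm_uniq) _ _).2; last by rewrite size_iota size_take.
move=> x /(nthP 0)[j]; rewrite size_take => lt_jk <-.
by rewrite nth_take // mem_iota add1n ltnS; apply: ent_range.
Qed.

Lemma indecomposableP : 0 < n ->
  indecomposable p <-> forall k, 0 < k < n -> exists2 j, j < k & k < P j.
Proof.
move=> n_gt0; rewrite /indecomposable is_perm_size n_gt0; split.
- move=> /allP indec k k_range.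
  have /negP not_prefix : ~~ perm_eq (take k p) (iota 1 k) by apply: indec; rewrite mem_iota; lia.
  have [/hasP[j]|/hasPn small] := boolP (has (fun j => k < P j) (iota 0 k)).
    by rewrite mem_iota => lt_jk; exists j.
  case: not_prefix; apply/prefix_perm_iotaP; first lia.
  move=> j lt_jk; have := small j; rewrite mem_iota => /(_ lt_jk).
  by have := is_perm_ent_range (k := j); lia.
- move=> big; apply/allP=> k; rewrite mem_iota => k_range.
  apply/negP=> /prefix_perm_iotaP prefix; have [|j lt_jk lt_kPj] := big k; first lia.
  by have := prefix ltac:(lia) j lt_jk; lia.
Qed.

End Permutation.

Lemma indecomposable_ins n p y s : is_perm n p -> s <= n -> 0 < y <= n.+1 ->
  indecomposable p -> 0 < s \/ 1 < y -> s < n \/ y <= n -> indecomposable (ins p s.+1 y).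
Proof.
move=> perm_p le_sn y_range indec_p not_first not_last.
have n_gt0 : 0 < n by case/andP: indec_p; rewrite (is_perm_size perm_p).
have s_le : s <= size p by rewrite (is_perm_size perm_p).
have /(indecomposableP perm_p n_gt0) big_p := indec_p.
apply/(indecomposableP (is_perm_ins perm_p s y_range)) => // k k_range.
have Qbump j : ent (ins p s.+1 y) (bump s j) = bump y (ent p j).
  by apply: ent_ins_bump; lia.
case: (leqP k s) => [le_ks|lt_sk].
  case: (ltnP k n) => [lt_kn|ge_kn].
    have [j lt_jk lt_kPj] := big_p k ltac:(lia).
    by exists (bump s j); rewrite ?Qbump /bump; lia.
  have [j lt_jn Pj] := is_perm_ent_surj perm_p (v := n) ltac:(lia).
  by exists (bump s j); rewrite ?Qbump ?Pj /bump; lia.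
case: (eqVneq k 1) => [k1|k_neq1].
  by exists s; rewrite ?ent_ins_at; lia.
have [j lt_jk lt_kPj] := big_p k.-1 ltac:(lia).
case: (ltnP k (ent p j)) => [lt_kPj'|le_Pjk].
  by exists (bump s j); rewrite ?Qbump /bump; lia.
case: (leqP y k) => [le_yk|lt_ky].
  by exists (bump s j); rewrite ?Qbump /bump; lia.
by exists s; rewrite ?ent_ins_at.
Qed.

(** * The last "1" of a 321 and the peak slot *)

Definition last_below (p : seq nat) (y d : nat) : Prop :=
  [/\ d < size p, ent p d < y & forall k, d < k < size p -> y <= ent p k].

Lemma last_below_exists p y k : k < size p -> ent p k < y ->
  exists2 d, last_below p y d & k <= d.
Proof.
move=> lt_kN lt_Pky; pose below := fun i => (i < size p) && (ent p i < y).
have below_k : exists i, below i by exists k; apply/andP.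
have below_bounded i : below i -> i <= size p by case/andP=> /ltnW.
case: (ex_maxnP below_k below_bounded) => d /andP[lt_dN lt_Pdy] max_d.
exists d; last by apply: max_d; apply/andP.
split=> // k' /andP[lt_dk' lt_k'N]; rewrite leqNgt; apply/negP=> lt_Pk'y.
by have := max_d k' (introT andP (conj lt_k'N lt_Pk'y)); lia.
Qed.

Lemma last_below_unique p y d1 d2 : last_below p y d1 -> last_below p y d2 -> d1 = d2.
Proof.
move=> [lt1 v1 after1] [lt2 v2 after2].
case: (ltngtP d1 d2) => // [lt12|lt21]; [have := after1 d2 | have := after2 d1]; lia.
Qed.

Lemma last_one_exists p : contains p [:: 3; 2; 1] -> exists ja, is_last_one p ja.
Proof.
case/contains321P=> i [j [k [lt_ij lt_jk lt_kN v1 v2]]].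
have one_k : exists t, one321_at p t by exists k; apply/one321_atP; exists i, j.
have one_bounded t : one321_at p t -> t <= size p by case/one321_atP=> ? [? [_ _ /ltnW]].
case: (ex_maxnP one_k one_bounded) => ja one_ja max_ja.
by exists ja; split.
Qed.

Lemma last_one_unique p j1 j2 : is_last_one p j1 -> is_last_one p j2 -> j1 = j2.
Proof. by move=> [one1 max1] [one2 max2]; apply/eqP; rewrite eqn_leq max1 ?max2. Qed.

Lemma is_b_unique p ja b1 b2 : is_b p ja b1 -> is_b p ja b2 -> b1 = b2.
Proof.
move=> [lt1 [v1 max1]] [lt2 [v2 max2]].
by case: (ltngtP b1 b2) => // [lt12|lt21]; [case: (max1 b2) | case: (max2 b1)].
Qed.

Lemma is_b_exists p ja : is_last_one p ja -> exists jb, is_b p ja jb.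
Proof.
case=> /one321_atP[i [j [lt_ij lt_jja _ _ v2]]] _.
pose above := fun k => (k < ja) && (ent p ja < ent p k).
have above_j : exists k, above k by exists j; apply/andP.
have above_bounded k : above k -> k <= ja by case/andP=> /ltnW.
case: (ex_maxnP above_j above_bounded) => jb /andP[lt_jb v] max_jb.
exists jb; split; [done | split=> // k lt_jbk lt_kja v'].
by have := max_jb k (introT andP (conj lt_kja v')); lia.
Qed.

Lemma last_one_contains p ja : is_last_one p ja -> contains p [:: 3; 2; 1].
Proof. by case=> /one321_atP[i [j [? ? ? ? ?]]] _; apply/contains321P; exists i, j, ja. Qed.

(* The position (0-indexed) at which [y] must be inserted.  With [a], [b], [c] at [ja], [jb],
   [jc]: for [y] in [a+1, b+1], right after [a] if an inversion of [p] left of [a] lies above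
   [y], and right before [a] otherwise; for [y] in [c+1, n], or when [p] avoids 321, right
   before the last entry smaller than [y]. *)
Inductive peak_slot (n : nat) (p : seq nat) (y : nat) : nat -> Prop :=
  | SlotAfterOne ja jb : is_last_one p ja -> is_b p ja jb ->
      ent p ja < y <= ent p jb + 1 -> inversion_above p y ja -> peak_slot n p y ja.+1
  | SlotAtOne ja jb : is_last_one p ja -> is_b p ja jb ->
      ent p ja < y <= ent p jb + 1 -> ~ inversion_above p y ja -> peak_slot n p y ja
  | SlotLastBelow ja jb jc d : is_last_one p ja -> is_b p ja jb -> is_c p ja jc ->
      ent p jc < y <= n -> last_below p y d -> peak_slot n p y d
  | SlotNo321 d : ~~ contains p [:: 3; 2; 1] -> 1 < y <= n -> last_below p y d ->
      peak_slot n p y d.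

Lemma peak_slot_in_set n p y s : peak_slot n p y s -> in_peak_insertion_set n p y.
Proof.
case=> [ja jb last_ja b_jb y_range _|ja jb last_ja b_jb y_range _
       |ja jb jc d last_ja b_jb c_jc y_range _|d no321 y_range _].
- by right; exists ja, jb; do 2!split=> //; left; lia.
- by right; exists ja, jb; do 2!split=> //; left; lia.
- by right; exists ja, jb; do 2!split=> //; right; exists jc; split=> //; lia.
- by left.
Qed.

Lemma peak_slot_le_size n p y s : peak_slot n p y s -> s <= size p.
Proof.
by case=> [ja jb [/one321_atP[? [? [_ _ ? _ _]]] _] _ _ _
          |ja jb [/one321_atP[? [? [_ _ ? _ _]]] _] _ _ _
          |ja jb jc d _ _ _ _ [? _ _]|d _ _ [? _ _]]; lia.
Qed.

Section Avoider.
Variables (n : nat) (p : seq nat).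
Hypothesis avoider_p : avoider n p.
Local Notation P := (ent p).

Lemma avoider_perm : is_perm n p.
Proof. by case/and4P: avoider_p. Qed.

Lemma avoider_indecomposable : indecomposable p.
Proof. by case/and4P: avoider_p. Qed.

Lemma avoider_size : size p = n.
Proof. exact: is_perm_size avoider_perm. Qed.

Lemma avoider_ent_inj i j : i < n -> j < n -> P i = P j -> i = j.
Proof. exact: (is_perm_ent_inj avoider_perm). Qed.

Lemma avoider_no4321 i j k l : i < j -> j < k -> k < l -> l < n ->
  P j < P i -> P k < P j -> P l < P k -> False.
Proof.
move=> *; case/and4P: avoider_p => _ _ _ /contains4321P; apply.
by exists i, j, k, l; rewrite avoider_size.
Qed.

Lemma avoider_no3241 i j k l : i < j -> j < k -> k < l -> l < n ->
  P j < P i -> P i < P k -> P l < P j -> False.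
Proof.
move=> *; case/and4P: avoider_p => _ _ /contains3241P + _; apply.
by exists i, j, k, l; rewrite avoider_size.
Qed.

Section LastOne.
Variables ja jb : nat.
Hypotheses (last_ja : is_last_one p ja) (b_jb : is_b p ja jb).

Lemma is_b_not_LRMax : exists2 u, u < jb & P jb < P u.
Proof.
case: last_ja b_jb => /one321_atP[i [i' [lt_ii' lt_i'ja lt_jaN v1 v2]]] _.
move=> [lt_jbja [v max_jb]].
have le_i'jb : i' <= jb by rewrite leqNgt; apply/negP=> lt; case: (max_jb i').
rewrite avoider_size in lt_jaN.
case: (ltngtP (P i) (P jb)) => [lt_ijb|gt_ijb|eq_ijb].
- have lt_i'jb : i' < jb by case: (ltngtP i' jb) => // eq_i'jb; subst; lia.
  by exfalso; apply: (avoider_no3241 lt_ii' lt_i'jb lt_jbja lt_jaN).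
- by exists i => //; lia.
- by have := avoider_ent_inj (i := i) (j := jb); lia.
Qed.

Lemma is_b_lt_right k : ja < k < n -> P jb < P k.
Proof.
move=> k_range; have [u lt_ujb lt_jbu] := is_b_not_LRMax.
case: last_ja b_jb => _ max_ja [lt_jbja [v _]].
case: (ltngtP (P jb) (P k)) => // [gt|eq]; last first.
  by have := avoider_ent_inj (i := jb) (j := k); lia.
have : one321_at p k by apply/one321_atP; exists u, jb; rewrite avoider_size; split; lia.
by move/max_ja; lia.
Qed.

End LastOne.

Lemma is_c_gt_b ja jb jc : is_last_one p ja -> is_b p ja jb -> is_c p ja jc -> P jb < P jc.
Proof.
move=> last_ja b_jb [lt_jajc [lt_jcN _]].
by apply: (is_b_lt_right last_ja b_jb); rewrite -avoider_size; lia.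
Qed.

Lemma peak_slot_unique y s1 s2 : peak_slot n p y s1 -> peak_slot n p y s2 -> s1 = s2.
Proof.
case=> [ja jb last_ja b_jb y_range inv|ja jb last_ja b_jb y_range ninv
       |ja jb jc d last_ja b_jb c_jc y_range below|d no321 y_range below];
case=> [ja' jb' last' b' y_range' inv'|ja' jb' last' b' y_range' ninv'
       |ja' jb' jc' d' last' b' c' y_range' below'|d' no321' y_range' below'];
try (by case/negP: no321; apply: last_one_contains last');
try (by case/negP: no321'; apply: last_one_contains last_ja);
try (have eq_ja := last_one_unique last_ja last'; subst ja';
     have eq_jb := is_b_unique b_jb b'; subst jb').
all: try by [].
all: try exact: last_below_unique below below'.
all: first [have := is_c_gt_b last_ja b_jb c'; lia | have := is_c_gt_b last_ja b_jb c_jc; lia].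
Qed.

Lemma peak_slot_of_set y : in_peak_insertion_set n p y -> exists s, peak_slot n p y s.
Proof.
case=> [[no321 y_range]|[ja [jb [last_ja [b_jb [y_range|[jc [c_jc y_range]]]]]]]].
- have [k lt_kn Pk] := is_perm_ent_surj avoider_perm (v := 1) ltac:(lia).
  have lt_kN : k < size p by rewrite avoider_size.
  have [d below _] := @last_below_exists p y k lt_kN ltac:(rewrite Pk; lia).
  by exists d; apply: SlotNo321.
- have y_range' : P ja < y <= P jb + 1 by lia.
  have [inv|ninv] := classic (inversion_above p y ja).
    by exists ja.+1; apply: SlotAfterOne last_ja b_jb y_range' inv.
  by exists ja; apply: SlotAtOne last_ja b_jb y_range' ninv.
- have [lt_jajc [lt_jcN _]] := c_jc.
  have [d below _] := @last_below_exists p y jc lt_jcN ltac:(lia).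
  by exists d; apply: (SlotLastBelow last_ja b_jb c_jc) below; lia.
Qed.

End Avoider.

(** * A good insertion happens at the peak slot *)

Lemma LRMaxP p k : reflect (LRMax p k) (all (fun k' => ent p k' < ent p k) (iota 0 k)).
Proof.
apply: (iffP allP) => [lrmax k' lt_k'k|lrmax k']; last by rewrite mem_iota => /andP[_ /lrmax].
by apply: lrmax; rewrite mem_iota.
Qed.

Lemma first_non_LRMax_after p ja k : ja < k < size p -> ~ LRMax p k ->
  exists jc, is_c p ja jc /\ jc <= k.
Proof.
move=> k_range not_lrmax_k.
pose cand := fun j => (ja < j < size p) && ~~ all (fun j' => ent p j' < ent p j) (iota 0 j).
have cand_k : exists j, cand j.
  by exists k; rewrite /cand k_range; apply/negP=> /LRMaxP.
case: (ex_minnP cand_k) => jc /andP[/andP[lt_jajc lt_jcN] /LRMaxP not_lrmax_jc] min_jc.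
exists jc; split; last by apply: min_jc; rewrite /cand k_range; apply/negP=> /LRMaxP.
split=> //; split=> //; split=> // j lt_jaj lt_jjc; apply/LRMaxP/negPn/negP => not_lrmax_j.
have := min_jc j; rewrite /cand not_lrmax_j lt_jaj (ltn_trans lt_jjc lt_jcN) /=; lia.
Qed.

Section GoodInsertion.
Variables (n : nat) (p : seq nat) (y s : nat).
Hypotheses (avoider_p : avoider n p) (y_range : 0 < y <= n.+1) (le_sn : s <= n).
Local Notation P := (ent p).
Local Notation q := (ins p s.+1 y).
Local Notation Q := (ent (ins p s.+1 y)).
Hypothesis avoider_q : avoider n.+1 q.

Let y_gt0 : 0 < y. Proof. by case/andP: y_range. Qed.
Let s_le : s <= size p. Proof. by rewrite (avoider_size avoider_p). Qed.
Let size_p : size p = n. Proof. exact: avoider_size avoider_p. Qed.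

Lemma good_ins_no_new_4321 i j l : i < j -> j < s -> s <= l -> l < n ->
  P j < P i -> y <= P j -> P l < y -> False.
Proof.
move=> *; case/and4P: avoider_q => _ _ _ /negP; apply.
by apply: (contains4321_ins_of y_gt0 s_le (i := i) (j := j) (l := l)); rewrite ?size_p.
Qed.

Lemma good_ins_no_new_3241 i j l : i < j -> j < s -> s <= l -> l < n ->
  P j < P i -> P i < y -> P l < P j -> False.
Proof.
move=> *; case/and4P: avoider_q => _ _ /negP + _; apply.
by apply: (contains3241_ins_of y_gt0 s_le (i := i) (j := j) (l := l)); rewrite ?size_p.
Qed.

Variable jq : nat.
Hypothesis last_jq : is_last_one q jq.

Let lt_jq : jq < n.+1.
Proof. by case: last_jq => /one321_atP[? [? [_ _]]]; rewrite size_ins // size_p. Qed.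

Let ins_ent_inj a b : a < n.+1 -> b < n.+1 -> Q a = Q b -> a = b.
Proof. by apply: is_perm_ent_inj; case/and4P: avoider_q. Qed.

Let last_one_bound k : one321_at p k -> bump s k <= jq.
Proof. by case: last_jq => _ max_jq /(one321_at_ins_bump y_gt0 s_le)/max_jq. Qed.

Lemma good_slot_of_y_last_one : Q jq = y -> Q jq.-1 <= y -> peak_slot n p y s.
Proof.
move=> Qjq le_Qy.
have eq_jqs : jq = s by apply: ins_ent_inj; rewrite ?Qjq ?ent_ins_at ?lt_jq //; lia.
subst jq; have [/(one321_at_ins_cases y_gt0 s_le) one_s _] := last_jq.
case: one_s => [[_ [i [j [lt_ij lt_js v1 v2]]]]|[k [/eqP]]]; last first.
  by rewrite (negbTE (neq_bump s k)).
have lt_Ps1y : P s.-1 < y.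
  move: le_Qy; rewrite (ent_ins_lt y_gt0 s_le); last lia.
  by rewrite leq_eqVlt eq_sym (negbTE (neq_bump _ _)) bump_ltn.
have lt_js1 : j < s.-1 by case: (ltngtP j s.-1) => // eq_js1; [lia | subst; lia].
have last_s1 : is_last_one p s.-1.
  split=> [|k /last_one_bound]; last by rewrite /bump; lia.
  by apply/one321_atP; exists i, j; split=> //; lia.
have [jb b_jb] := is_b_exists last_s1.
have [lt_jbs1 [lt_Pjb max_jb]] := b_jb.
have le_yjb : y <= P jb + 1.
  rewrite leqNgt; apply/negP=> lt_jby.
  have lt_jjb : j < jb.
    case: (ltngtP j jb) => // [gt_jjb|eq_jjb]; last by subst; lia.
    by case: (max_jb j) => //; lia.
  by apply: (avoider_no4321 avoider_p lt_ij lt_jjb lt_jbs1); lia.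
have -> : s = s.-1.+1 by lia.
by apply: SlotAfterOne last_s1 b_jb _ _; [lia | exists i, j].
Qed.

Section YBeforeLastOne.
Hypotheses (eq_jq : jq = s.+1) (lt_Psy : P s < y).

Let lt_sn : s < n. Proof. lia. Qed.

Lemma good_slot_at_one : one321_at p s -> peak_slot n p y s.
Proof.
move=> one_s; have last_s : is_last_one p s.
  by split=> // k /last_one_bound; rewrite eq_jq /bump; lia.
have [jb b_jb] := is_b_exists last_s; have [lt_jbs [lt_Psjb max_jb]] := b_jb.
have [i [i' [lt_ii' lt_i's _ v1 v2]]] := one321_atP _ _ one_s.
have le_yi : y <= P i.
  rewrite leqNgt; apply/negP=> lt_iy.
  exact: (good_ins_no_new_3241 lt_ii' lt_i's (l := s)).
apply: SlotAtOne last_s b_jb _ _ => [|[X [V [lt_XV lt_Vs vX vV]]]]; last first.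
  by apply: (good_ins_no_new_4321 lt_XV lt_Vs (l := s)).
(* The entry [y.-1 > b] can sit neither left of [s] (a 3241 in [q], or a contradiction with
   the choice of [b]) nor right of it (a later 321 in [q]). *)
rewrite lt_Psy /= leqNgt; apply/negP=> lt_jby.
have [w lt_wn Pw] := is_perm_ent_surj (avoider_perm avoider_p) (v := y.-1) ltac:(lia).
case: (ltngtP w s) => [lt_ws|lt_sw|eq_ws]; last by subst; lia.
- case: (ltngtP w jb) => [lt_wjb|lt_jbw|eq_wjb]; last by subst; lia.
    by apply: (good_ins_no_new_3241 lt_wjb lt_jbs (l := s)); lia.
  by case: (max_jb w) => //; lia.
- have one_w1 : one321_at q w.+1.
    by apply: (one321_at_ins_after y_gt0 s_le (i := i)); rewrite ?size_p; lia.
  by have [_ /(_ _ one_w1)] := last_jq; lia.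
Qed.

Lemma good_slot_last_below U : ~~ one321_at p s -> U < s -> y <= P U -> peak_slot n p y s.
Proof.
move=> not_one_s lt_Us le_yU.
have later_ge k : s < k < n -> y <= P k.
  move=> k_range; rewrite leqNgt; apply/negP=> lt_ky.
  have one_k1 : one321_at q k.+1.
    by apply: (one321_at_ins_after y_gt0 s_le (i := U)); rewrite ?size_p; lia.
  by have [_ /(_ _ one_k1)] := last_jq; lia.
have below : last_below p y s by split; rewrite ?size_p.
have le_yn : y <= n by have := is_perm_ent_range (avoider_perm avoider_p) (k := U); lia.
have [/last_one_exists[ja last_ja]|no321] := boolP (contains p [:: 3; 2; 1]); last first.
  by apply: SlotNo321 below => //; have := is_perm_ent_range (avoider_perm avoider_p) lt_sn; lia.
have [jb b_jb] := is_b_exists last_ja.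
have lt_jas : ja < s.
  have [one_ja _] := last_ja; have := last_one_bound one_ja; rewrite eq_jq /bump.
  by case: (ltngtP ja s) => // eq_jas; [lia | subst; rewrite one_ja in not_one_s].
have not_LRMax_s : ~ LRMax p s by move/(_ U lt_Us); lia.
have s_range : ja < s < size p by rewrite size_p; lia.
have [jc [c_jc le_jcs]] := first_non_LRMax_after s_range not_LRMax_s.
apply: (SlotLastBelow last_ja b_jb c_jc) below; rewrite le_yn andbT ltnNge; apply/negP=> le_yjc.
have [_ [lt_jcN [not_lrmax_jc _]]] := c_jc.
have lt_jcs : jc < s by case: (ltngtP jc s) => // eq_jcs; [lia | subst; lia].
have [k' lt_k'jc lt_jck'] : exists2 k', k' < jc & P jc < P k'.
  have /allPn[k'] : ~~ all (fun k' => P k' < P jc) (iota 0 jc) by apply/negP=> /LRMaxP.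
  rewrite mem_iota => /andP[_ lt_k'jc]; rewrite -leqNgt leq_eqVlt => /orP[/eqP eq_P|].
    by have := avoider_ent_inj avoider_p (i := jc) (j := k'); rewrite size_p in lt_jcN; lia.
  by exists k'.
case/negP: not_one_s; apply/one321_atP; exists k', jc.
by rewrite size_p; split=> //; lia.
Qed.

End YBeforeLastOne.

Lemma good_slot_of_y_before_last_one : Q jq.-1 = y -> Q jq < y -> peak_slot n p y s.
Proof.
move=> Qjq1 lt_Qy; have [one_jq _] := last_jq.
have lt_0jq : 0 < jq by case/one321_atP: one_jq => ? [? []]; lia.
have eq_jq : jq = s.+1.
  by have := ins_ent_inj (a := jq.-1) (b := s); rewrite (ent_ins_at y s_le) Qjq1; have := lt_jq; lia.
have lt_Psy : P s < y by move: lt_Qy; rewrite eq_jq (ent_ins_gt y_gt0 s_le) // bump_ltn.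
have [one_s|not_one_s] := boolP (one321_at p s); first exact: good_slot_at_one.
move: one_jq; rewrite eq_jq => /(one321_at_ins_cases y_gt0 s_le) [[eq_s1s _]|[k [eq_k _]]]; first lia.
have -> : k = s by move: eq_k; rewrite /bump; lia.
case=> [one_s|[_ [U [lt_Us le_yU _]]]|[j [le_sj lt_js _ _]]]; last lia.
  by rewrite one_s in not_one_s.
exact: good_slot_last_below not_one_s lt_Us le_yU.
Qed.

End GoodInsertion.

Lemma good_insertion_peak_slot n p y s : avoider n p -> 0 < y <= n.+1 -> s <= n ->
  good_insertion n p s.+1 y -> peak_slot n p y s.
Proof.
move=> avoider_p y_range le_sn [avoider_q [[jq [last_jq peak]] _]].
have good_slot := good_slot_of_y_last_one avoider_p y_range le_sn avoider_q last_jq.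
have good_slot' := good_slot_of_y_before_last_one avoider_p y_range le_sn avoider_q last_jq.
have [le|lt] := leqP (ent (ins p s.+1 y) jq.-1) (ent (ins p s.+1 y) jq).
  by move: peak; rewrite (maxn_idPl le) => Qjq; apply: good_slot; rewrite -Qjq in le *.
by move: peak; rewrite (maxn_idPr (ltnW lt)) => Qjq1; apply: good_slot'; rewrite -Qjq1 in lt *.
Qed.

(** * Insertion at the peak slot is good *)

Section SlotInsertion.
Variables (n : nat) (p : seq nat) (y s : nat).
Hypotheses (avoider_p : avoider n p) (y_range : 0 < y <= n.+1) (le_sn : s <= n).
Local Notation P := (ent p).
Local Notation q := (ins p s.+1 y).
Local Notation Q := (ent (ins p s.+1 y)).

Let y_gt0 : 0 < y. Proof. by case/andP: y_range. Qed.
Let s_le : s <= size p. Proof. by rewrite (avoider_size avoider_p). Qed.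
Let size_p : size p = n. Proof. exact: avoider_size avoider_p. Qed.
Let perm_p : is_perm n p. Proof. exact: avoider_perm avoider_p. Qed.

Lemma good_ins_of_parts : indecomposable q ->
  ~~ contains q [:: 3; 2; 4; 1] -> ~~ contains q [:: 4; 3; 2; 1] ->
  peak_blue_is q y -> (forall k, blue_at q (bump s k) -> blue_at p k) -> blue q y ->
  good_insertion n p s.+1 y.
Proof.
move=> indec_q no3241 no4321 peak blue_back blue_y; split; last split=> //.
  by apply/and4P; split=> //; exact: is_perm_ins.
apply: nblue_ins blue_y.
exact: (blue_ins_bump y_gt0 s_le) (is_perm_uniq perm_p) blue_back.
Qed.

Section AfterLastOne.
Variable ja : nat.
Hypotheses (last_ja : is_last_one p ja) (eq_s : s = ja.+1) (lt_Pjay : P ja < y).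
Hypothesis inv : inversion_above p y ja.

Let later_ge k : ja < k < n -> y <= P k.
Proof.
move=> k_range; rewrite leqNgt; apply/negP=> lt_ky; have [i [j [lt_ij lt_jja v1 v2]]] := inv.
have /(proj2 last_ja) : one321_at p k by apply/one321_atP; exists i, j; rewrite size_p; split; lia.
lia.
Qed.

Let le_yn : y <= n.
Proof.
have [i [j [_ lt_jja _ le_yj]]] := inv; have [/one321_atP[? [? [_ _ lt_jaN _ _]]] _] := last_ja.
by have := is_perm_ent_range perm_p (k := j); rewrite size_p in lt_jaN; lia.
Qed.

Lemma ins_after_no3241 : ~~ contains q [:: 3; 2; 4; 1].
Proof.
apply/negP=> /(contains3241_ins_cases y_gt0 s_le); rewrite size_p.
case=> [|[[j [k [l [? ? ? ? [? ? ?]]]]]|[i [k [l [? ? ? ? [? ? ?]]]]]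
       |[i [j [l [? ? ? ? [? ? ?]]]]]|[i [j [k [? ? ? ? [? ? ?]]]]]]].
- by case/and4P: avoider_p => _ _ /negP.
- by have := later_ge (k := j); lia.
- by have := later_ge (k := l); lia.
- by have := later_ge (k := l); lia.
- have lt_kja : k < ja by case: (ltngtP k ja) => // [gt_kja|eq_kja]; [lia | subst; lia].
  by apply: (avoider_no3241 avoider_p (i := i) (j := j) (k := k) (l := ja)); lia.
Qed.

Lemma ins_after_no4321 : ~~ contains q [:: 4; 3; 2; 1].
Proof.
apply/negP=> /(contains4321_ins_cases y_gt0 s_le); rewrite size_p.
case=> [|[[j [k [l [? ? ? ? [? ? ?]]]]]|[i [k [l [? ? ? ? [? ? ?]]]]]
       |[i [j [l [? ? ? ? [? ? ?]]]]]|[i [j [k [? ? ? ? [? ? ?]]]]]]].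
- by case/and4P: avoider_p => _ _ _ /negP.
- by have := later_ge (k := j); lia.
- by have := later_ge (k := k); lia.
- by have := later_ge (k := l); lia.
- have lt_kja : k < ja by case: (ltngtP k ja) => // [gt_kja|eq_kja]; [lia | subst; lia].
  by apply: (avoider_no4321 avoider_p (i := i) (j := j) (k := k) (l := ja)); lia.
Qed.

Lemma ins_after_peak : peak_blue_is q y.
Proof.
have inv_s : inversion_above p y s by case: inv => i [j [? ? ? ?]]; exists i, j; split; lia.
exists s; split; [split; first exact: one321_at_ins_at|].
  move=> t /(one321_at_ins_cases y_gt0 s_le) [[-> _]|[k [-> lt_kN]]].
    by [].
  case=> [/(proj2 last_ja)|[lt_sk [i [_ _ lt_ky]]]|[j [le_sj lt_jk lt_jy _]]].
  - by rewrite /bump; lia.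
  - by have := later_ge (k := k); lia.
  - by have := later_ge (k := j); lia.
rewrite (ent_ins_at y s_le) (ent_ins_lt y_gt0 s_le); last lia.
by rewrite eq_s /= /bump; lia.
Qed.

Lemma ins_after_blue_back k : blue_at q (bump s k) -> blue_at p k.
Proof.
move=> blue_k; have := blue_at_size blue_k.
rewrite (size_ins y s_le) (bump_ltn_size s_le) => lt_kN.
case: (blue_at_ins_cases y_gt0 s_le blue_k lt_kN).
case=> [//|[le_sk [lt_ky _]]|[lt_ks [le_yk [i [lt_ik lt_ki]]]]].
- by have := later_ge (k := k); lia.
- have lt_kja : k < ja by case: (ltngtP k ja) => // [gt_kja|eq_kja]; [lia | subst; lia].
  by left; exists i, ja; rewrite size_p; split; lia.
case=> [[j [l [? ? ? [? ? ?]]]]|[i [l [? ? ? [? ? ?]]]]|[i [j [lt_ij lt_js le_sk [vj vk vy]]]]].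
- by have := later_ge (k := j); lia.
- by have := later_ge (k := k); lia.
- have lt_jja : j < ja by case: (ltngtP j ja) => // [gt_jja|eq_jja]; [lia | subst; lia].
  by right; exists i, j, ja; rewrite size_p; split; try split; lia.
Qed.

Lemma good_ins_after_last_one : good_insertion n p s.+1 y.
Proof.
have [i [j [lt_ij lt_jja v1 v2]]] := inv.
apply: good_ins_of_parts ins_after_no3241 ins_after_no4321 ins_after_peak ins_after_blue_back _.
  by apply: (indecomposable_ins perm_p _ _ (avoider_indecomposable avoider_p)); lia.
by apply: (blue_ins_last y_gt0 s_le (i := i) (j := j) (k := ja)); lia.
Qed.

End AfterLastOne.

Section BeforeLastOne.
Hypotheses (below : last_below p y s) (high_before : exists2 X, X < s & y <= P X).
Hypothesis no_one_after : forall k, one321_at p k -> k <= s.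
Hypothesis no_inv : ~ inversion_above p y s.
Hypothesis no_3241 : forall i j, i < j -> j < s -> P j < P i -> P i < y -> P s < P j -> False.

Let lt_sn : s < n. Proof. by case: below; rewrite size_p. Qed.
Let lt_Psy : P s < y. Proof. by case: below. Qed.
Let later_ge k : s < k < n -> y <= P k. Proof. by case: below => _ _; rewrite size_p; apply. Qed.

Lemma ins_before_no3241 : ~~ contains q [:: 3; 2; 4; 1].
Proof.
apply/negP=> /(contains3241_ins_cases y_gt0 s_le); rewrite size_p.
case=> [|[[j [k [l [? ? ? ? [? ? ?]]]]]|[i [k [l [? ? ? ? [? ? ?]]]]]
       |[i [j [l [? ? ? ? [? ? ?]]]]]|[i [j [k [? ? ? ? [? ? ?]]]]]]].
- by case/and4P: avoider_p => _ _ /negP.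
- by have := later_ge (k := j); have := later_ge (k := l); case: (ltngtP j s) => *; subst; lia.
- by have := later_ge (k := l); lia.
- case: (ltngtP l s) => [|lt_sl|eq_ls]; [lia | by have := later_ge (k := l); lia | subst].
  by apply: (no_3241 (i := i) (j := j)).
- by apply: no_inv; exists i, j; split; lia.
Qed.

Lemma ins_before_no4321 : ~~ contains q [:: 4; 3; 2; 1].
Proof.
apply/negP=> /(contains4321_ins_cases y_gt0 s_le); rewrite size_p.
case=> [|[[j [k [l [? ? ? ? [? ? ?]]]]]|[i [k [l [? ? ? ? [? ? ?]]]]]
       |[i [j [l [? ? ? ? [? ? ?]]]]]|[i [j [k [? ? ? ? [? ? ?]]]]]]].
- by case/and4P: avoider_p => _ _ _ /negP.
- by have := later_ge (k := j); have := later_ge (k := k); case: (ltngtP j s) => *; subst; lia.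
- by have := later_ge (k := k); have := later_ge (k := l); case: (ltngtP k s) => *; subst; lia.
- by apply: no_inv; exists i, j; split; lia.
- by apply: no_inv; exists j, k; split; lia.
Qed.

Lemma ins_before_peak : peak_blue_is q y.
Proof.
have [X lt_Xs le_yX] := high_before.
exists s.+1; split; [split|].
- by apply: (one321_at_ins_after y_gt0 s_le (i := X)); rewrite ?size_p.
- move=> t /(one321_at_ins_cases y_gt0 s_le) [[-> _]//|[k [-> lt_kN]]]; rewrite size_p in lt_kN.
  case=> [/no_one_after|[le_sk [i [_ _ lt_ky]]]|[j [le_sj lt_jk lt_jy lt_kj]]]; rewrite /bump.
  + by lia.
  + by have := later_ge (k := k); case: (ltngtP k s) => *; subst; lia.
  + by have := later_ge (k := j); have := later_ge (k := k); case: (ltngtP j s) => *; subst; lia.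
rewrite (ent_ins_gt y_gt0 s_le) // (ent_ins_at y s_le) /= /bump; lia.
Qed.

Lemma ins_before_blue_back k : blue_at q (bump s k) -> blue_at p k.
Proof.
move=> blue_k; have := blue_at_size blue_k.
rewrite (size_ins y s_le) (bump_ltn_size s_le) => lt_kN.
case: (blue_at_ins_cases y_gt0 s_le blue_k lt_kN).
case=> [//|[le_sk [lt_ky [l [lt_kl lt_lN lt_lk]]]]|[lt_ks [le_yk [i [lt_ik lt_ki]]]]].
- by have := later_ge (k := k); have := later_ge (k := l); case: (ltngtP k s) => *; subst; lia.
- by case: no_inv; exists i, k.
case=> [[j [l [? ? ? [? ? ?]]]]|[i [l [? ? ? [? ? ?]]]]|[i [j [lt_ij lt_js le_sk [vj vk vy]]]]].
- by have := later_ge (k := j); have := later_ge (k := k); case: (ltngtP j s) => *; subst; lia.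
- by have := later_ge (k := k); lia.
- case: (ltngtP k s) => [|lt_sk|eq_ks]; [lia | | by subst; lia].
  by right; exists i, j, s; split; try split; lia.
Qed.

Lemma good_ins_before_last_one : good_insertion n p s.+1 y.
Proof.
have [X lt_Xs le_yX] := high_before.
apply: good_ins_of_parts ins_before_no3241 ins_before_no4321 ins_before_peak ins_before_blue_back _.
  by apply: (indecomposable_ins perm_p _ _ (avoider_indecomposable avoider_p)); lia.
by apply: (blue_ins_middle y_gt0 s_le (i := X) (k := s)); rewrite ?size_p.
Qed.

End BeforeLastOne.

Lemma good_ins_at_last_one jb : is_last_one p s -> is_b p s jb ->
  P s < y <= P jb + 1 -> ~ inversion_above p y s -> good_insertion n p s.+1 y.
Proof.
move=> last_s b_jb y_range' no_inv.
have lt_sn : s < n by case: last_s => /one321_atP[? [? [_ _]]]; rewrite size_p.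
have [lt_jbs [lt_Pjb max_jb]] := b_jb.
have later_gt := is_b_lt_right avoider_p last_s b_jb.
have [u lt_ujb lt_jbu] := is_b_not_LRMax avoider_p last_s b_jb.
apply: good_ins_before_last_one => //.
- split; [by rewrite size_p | lia | move=> k; rewrite size_p => /later_gt; lia].
- by exists u; lia.
- exact: (proj2 last_s).
move=> i j lt_ij lt_js vj vi vs.
case: (ltngtP j jb) => [lt_jjb|lt_jbj|eq_jjb]; last by subst; lia.
  case: (ltngtP (P i) (P jb)) => [lt_ijb|gt_ijb|eq_ijb].
  - exact: (avoider_no3241 avoider_p lt_ij lt_jjb lt_jbs lt_sn).
  - lia.
  - by have := avoider_ent_inj avoider_p (i := i) (j := jb); lia.
by case: (max_jb j).
Qed.

Lemma high_entry_before : last_below p y s -> 1 < y <= n -> exists2 X, X < s & y <= P X.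
Proof.
move=> [lt_sN lt_Psy later_ge] y_range'.
(* The entries below [y] all sit at positions [<= s]; indecomposability at [y.-1] then
   provides an entry [>= y] left of position [y.-1 <= s.+1], hence left of [s]. *)
have le_y1s : y.-1 <= s.+1.
  have low_in_prefix : {subset iota 1 y.-1 <= take s.+1 p}.
    move=> v; rewrite mem_iota => v_range.
    have [k lt_kn Pk] := is_perm_ent_surj perm_p (v := v) ltac:(lia).
    have lt_ks1 : k < s.+1.
      by rewrite ltnNge; apply/negP=> le_s1k; have := later_ge k; rewrite size_p; lia.
    by rewrite -Pk /ent -(nth_take 0 lt_ks1) mem_nth // size_takel.
  by have := uniq_leq_size (iota_uniq 1 y.-1) low_in_prefix; rewrite size_iota size_takel.
have n_gt0 : 0 < n by lia.
have /(indecomposableP perm_p n_gt0) big_p := avoider_indecomposable avoider_p.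
have [j lt_jy1 lt_y1Pj] := big_p y.-1 ltac:(lia).
by exists j; [case: (ltngtP j s) => // [gt|eq]; [lia | subst; lia] | lia].
Qed.

Lemma good_ins_last_below : last_below p y s -> 1 < y <= n ->
  (forall k, one321_at p k -> k < s) -> good_insertion n p s.+1 y.
Proof.
move=> below y_range' ones_before; have [lt_sN lt_Psy _] := below.
have not_one_s : ~ one321_at p s by move/ones_before; rewrite ltnn.
apply: (good_ins_before_last_one below) => [|k /ones_before/ltnW //| |].
- exact: high_entry_before.
- by case=> i [j [lt_ij lt_js vj vy]]; apply: not_one_s; apply/one321_atP; exists i, j; split; lia.
- by move=> i j lt_ij lt_js vj vi vs; apply: not_one_s; apply/one321_atP; exists i, j.
Qed.

End SlotInsertion.

Lemma peak_slot_good_insertion n p y s : avoider n p -> 0 < y <= n.+1 -> s <= n ->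
  peak_slot n p y s -> good_insertion n p s.+1 y.
Proof.
move=> avoider_p y_range le_sn slot.
have size_p := avoider_size avoider_p.
case: slot le_sn => [ja jb last_ja b_jb ja_range inv|ja jb last_ja b_jb ja_range ninv
                    |ja jb jc d last_ja b_jb c_jc jc_range below|d no321 d_range below] le_sn.
- by apply: (good_ins_after_last_one avoider_p y_range le_sn last_ja erefl _ inv); lia.
- exact: (good_ins_at_last_one avoider_p y_range le_sn last_ja b_jb).
- have [lt_jajc [lt_jcN _]] := c_jc.
  have lt_jad : ja < d.
    have [_ _ later_ge] := below; rewrite ltnNge; apply/negP=> le_dja.
    by have := later_ge jc; lia.
  apply: good_ins_last_below => // [|k /(proj2 last_ja)]; last lia.
  by have := is_perm_ent_range (avoider_perm avoider_p) (k := jc); rewrite size_p in lt_jcN; lia.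
- apply: good_ins_last_below => // k one_k; case/negP: no321.
  by case/one321_atP: one_k => i [j [? ? ? ? ?]]; apply/contains321P; exists i, j, k.
Qed.

Theorem proposition8 (n : nat) (p : seq nat) :
  avoider n p ->
  forall y : nat, 1 <= y <= n.+1 ->
    (in_peak_insertion_set n p y ->
       exists! i : nat, (1 <= i <= n.+1) /\ good_insertion n p i y) /\
    (~ in_peak_insertion_set n p y ->
       ~ exists i : nat, (1 <= i <= n.+1) /\ good_insertion n p i y).
Proof.
move=> avoider_p y y_range.
have slot_of_good i : 1 <= i <= n.+1 -> good_insertion n p i y -> peak_slot n p y i.-1.
  move=> /andP[i_pos le_in]; rewrite -(ltn_predK i_pos) => /good_insertion_peak_slot.
  by apply; rewrite ?y_range //; lia.
split=> [in_set|not_in_set [i [i_range /(slot_of_good i i_range)/peak_slot_in_set //]]].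
have [s slot] := peak_slot_of_set avoider_p in_set.
have le_sn : s <= n by rewrite -(avoider_size avoider_p) (peak_slot_le_size slot).
exists s.+1; split=> [|i [i_range /(slot_of_good i i_range) slot']].
  by split; [lia | exact: peak_slot_good_insertion].
by have := peak_slot_unique avoider_p slot slot'; lia.
Qed.
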